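(* Let $V\in\mathbb{C}^{N\times N}$ be unitary, $c_1,c_2\in\mathbb{R}$, $D=c_1I+c_2V$, and $b\neq0$. Let $q_j$, $l_{jj}$, $l_{j+1,j}$, $u_{j-1,j}$ ($j=1,\dots,k$) be produced by the unitary Arnoldi process (described in the context) without breakdown, with $Q_k,L_k,U_k$ as there. Let $T_k=c_1U_k+c_2L_k$ (a tridiagonal matrix) and set $\beta_j=-c_2l_{j+1,j}$, $\gamma_j=-c_1u_{j,j+1}$. Assume $T_k$ has an LU factorization $T_k=\tilde L_k\tilde U_k$ with $\tilde L_k$ lower triangular with diagonal entries $\tilde l_{jj}\neq0$ and $\tilde U_k$ unit upper triangular. Then $$\tilde l_{11}=c_1+c_2l_{11},\qquad \tilde l_{jj}=c_1+c_2l_{jj}-\frac{\beta_{j-1}\gamma_{j-1}}{\tilde l_{j-1,j-1}}\quad(2\le j\le k).$$ Define $\alpha_1=\|b\|_2/\tilde l_{11}$, $\alpha_j=\beta_{j-1}\alpha_{j-1}/\tilde l_{jj}$, $w_1=q_1$, $w_j=q_j+u_{j-1,j}q_{j-1}+\frac{\gamma_{j-1}}{\tilde l_{j-1,j-1}}w_{j-1}$, $x_0=0$ and $x_j=x_{j-1}+\alpha_jw_j$. Then $w_j=Q_jU_j\tilde U_j^{-1}e_j$, $\alpha_j=\|b\|_2\,e_j^TT_j^{-1}e_1$, and $x_k$ is the unique vector in $\mathrm{span}\{b,Db,\dots,D^{k-1}b\}$ whose residual $r_k=b-Dx_k$ is orthogonal to this Krylov subspace; namely $x_k=Q_kU_kz_k$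 with $T_kz_k=\|b\|_2e_1$. Moreover $r_k=r_{k-1}-\alpha_kDw_k$.
   Context: Unitary Arnoldi process: $q_1=b/\|b\|_2$, $q_0=0$, $v_0=0$, $u_{01}=0$; for $j=1,2,\dots$: $v_j=Vq_j$, $u_{j-1,j}=-(q_{j-1}^*v_j)/(q_{j-1}^*v_{j-1})$ for $j>1$, $l_{jj}=q_j^*v_j+u_{j-1,j}q_j^*v_{j-1}$, $\tilde q_{j+1}=v_j-l_{jj}q_j+u_{j-1,j}v_{j-1}$, $l_{j+1,j}=\|\tilde q_{j+1}\|_2$, $q_{j+1}=\tilde q_{j+1}/l_{j+1,j}$; no breakdown means all $l_{j+1,j}\neq0$ and denominators nonzero. $Q_k=[q_1,\dots,q_k]$; $L_k$ is $k\times k$ lower bidiagonal with diagonal $l_{jj}$ and subdiagonal $l_{j+1,j}$; $U_k$ is $k\times k$ upper bidiagonal with unit diagonal and superdiagonal $u_{j-1,j}$. These satisfy $VQ_kU_k=Q_kL_k+l_{k+1,k}q_{k+1}e_k^T$ with $Q_{k+1}$ orthonormal. $e_j$ is the $j$-th standard unit vector. *)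

(* Complex scalars: an arbitrary numClosedFieldType C
   (this includes the genuine complex numbers, e.g. R[i] for R : realType). *)
From HB Require Import structures.
From mathcomp Require Import all_boot all_order all_algebra.
Set Implicit Arguments. Unset Strict Implicit. Unset Printing Implicit Defensive.
Import Order.TTheory GRing.Theory Num.Theory.
Local Open Scope ring_scope.

Definition adjmx {C : numClosedFieldType} {m n : nat} (A : 'M[C]_(m, n)) : 'M[C]_(n, m) :=
  (map_mx Num.conj A)^T.

Definition dotc {C : numClosedFieldType} {n : nat} (x y : 'cV[C]_n) : C :=
  (adjmx x *m y) 0 0.

Definition norm2 {C : numClosedFieldType} {n : nat} (x : 'cV[C]_n) : C :=
  sqrtC (dotc x x).

Definition unitary_matrix {C : numClosedFieldType} {n : nat} (V : 'M[C]_n) : Prop :=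
  adjmx V *m V = 1%:M /\ V *m adjmx V = 1%:M.

(* Index conventions (all 1-based, as in the paper):
     q j = q_j,  v j = v_j,  l j = l_{jj},  ls j = l_{j+1,j},  u j = u_{j-1,j}. *)
Definition unitary_arnoldi {C : numClosedFieldType} {N : nat} (V : 'M[C]_N)
  (b : 'cV[C]_N) (k : nat) (q v : nat -> 'cV[C]_N) (l ls u : nat -> C) : Prop :=
  [/\ q 0%N = 0, v 0%N = 0, u 1%N = 0, q 1%N = (norm2 b)^-1 *: b &
   forall j : nat, (1 <= j <= k)%N ->
    [/\ v j = V *m q j,
        ((1 < j)%N -> dotc (q j.-1) (v j.-1) != 0 /\
                      u j = - dotc (q j.-1) (v j) / dotc (q j.-1) (v j.-1)),
        l j = dotc (q j) (v j) + u j * dotc (q j) (v j.-1),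
        ls j = norm2 (v j - l j *: q j + u j *: v j.-1) &
        ls j != 0 /\ q j.+1 = (ls j)^-1 *: (v j - l j *: q j + u j *: v j.-1)]].

Definition Qmx {C : numClosedFieldType} {N : nat} (q : nat -> 'cV[C]_N) (j : nat)
  : 'M[C]_(N, j) := \matrix_(i < N, a < j) q a.+1 i 0.

Definition Lmx {C : numClosedFieldType} (l ls : nat -> C) (j : nat) : 'M[C]_j :=
  \matrix_(a < j, b < j)
    if a == b :> nat then l a.+1 else if a == b.+1 :> nat then ls b.+1 else 0.

(* U_j : unit upper bidiagonal, superdiagonal u_{b-1,b} in column b *)
Definition Umx {C : numClosedFieldType} (u : nat -> C) (j : nat) : 'M[C]_j :=
  \matrix_(a < j, b < j)
    if a == b :> nat then 1 else if b == a.+1 :> nat then u b.+1 else 0.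

Definition Tmx {C : numClosedFieldType} (c1 c2 : C) (l ls u : nat -> C) (j : nat)
  : 'M[C]_j := c1 *: Umx u j + c2 *: Lmx l ls j.

(* 0-based entry access by natural numbers (0 outside the range) *)
Definition mxn {C : numClosedFieldType} {m n : nat} (A : 'M[C]_(m, n)) (i j : nat) : C :=
  match (insub i : option 'I_m), (insub j : option 'I_n) with
  | Some a, Some b => A a b
  | _, _ => 0
  end.

Definition leadmx {C : numClosedFieldType} {n : nat} (j : nat) (A : 'M[C]_n) : 'M[C]_j :=
  \matrix_(a < j, b < j) mxn A a b.

(* standard unit column vector with a 1 in (0-based) position i *)
Definition ecol {C : numClosedFieldType} (j i : nat) : 'cV[C]_j :=
  \col_(a < j) (a == i :> nat)%:R.

Definition in_krylov {C : numClosedFieldType} {N : nat} (D : 'M[C]_N) (b : 'cV[C]_N)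
  (k : nat) (y : 'cV[C]_N) : Prop :=
  exists cs : 'I_k -> C, y = \sum_(i < k) cs i *: (D ^+ i *m b).

From HB Require Import structures.
From mathcomp Require Import all_boot all_order all_algebra.
From mathcomp Require Import ring zify.
Set Implicit Arguments. Unset Strict Implicit. Unset Printing Implicit Defensive.
Import Order.TTheory GRing.Theory Num.Theory.
Local Open Scope ring_scope.

(* The unitary Arnoldi vectors are orthonormal: on vectors orthogonal to
   q_1, ..., q_(i-1) the functional y |-> q_i^* V y is a fixed multiple of
   y |-> q_1^* V y, nonzero as long as there is no breakdown, so the local
   orthogonality imposed by l_jj and u_(j-1,j) propagates to all earlier vectors.
   Hence Q_k^* D Q_k U_k = T_k and Q_k^* b = ||b|| e_1, and x = Q_k U_k z
   satisfies the Galerkin condition on span{q_1, ..., q_k} iff T_k z = ||b|| e_1.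
   The LU factors of the tridiagonal T_k are bidiagonal, which gives the pivot
   recurrence; the recurrences for w_j and alpha_j say W_k U~_k = Q_k U_k and
   L~_k alpha = ||b|| e_1, so x_k = W_k alpha = Q_k U_k T_k^-1 ||b|| e_1.
   Finally span{q_1, ..., q_k} is the Krylov space when c2 != 0, while for
   c2 = 0 the Krylov space is span{b} and D = c1 I. *)

Section SupportedSums.
Variable R : nmodType.

Lemma sum_supp1 n t (F : nat -> R) : (t < n)%N ->
  (forall s, (s < n)%N -> s != t -> F s = 0) -> \sum_(s < n) F s = F t.
Proof.
move=> tn F0; rewrite (bigD1 (Ordinal tn)) //= big1 ?addr0 // => i ne.
by apply: F0 => //; rewrite -(inj_eq val_inj) in ne.
Qed.

Lemma sum_supp2 n t (F : nat -> R) : (t.+1 < n)%N ->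
  (forall s, (s < n)%N -> s != t -> s != t.+1 -> F s = 0) ->
  \sum_(s < n) F s = F t + F t.+1.
Proof.
move=> tn F0; have t'n : (t < n)%N := ltnW tn.
rewrite (bigD1 (Ordinal t'n)) // (bigD1 (Ordinal tn)) /=; last first.
  by rewrite -(inj_eq val_inj) /= gtn_eqF.
rewrite big1 ?addr0 // => i /andP[ne1 ne2].
by apply: F0; rewrite // -(inj_eq val_inj) in ne1 ne2.
Qed.

Lemma sum_trunc n m (F : nat -> R) : (m <= n)%N ->
  (forall s, (m <= s)%N -> F s = 0) -> \sum_(s < n) F s = \sum_(s < m) F s.
Proof.
move=> mn F0; rewrite (big_ord_widen n F mn) [RHS]big_mkcond /=.
by apply: eq_bigr => i _; case: ltnP => // /F0.
Qed.

End SupportedSums.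

Section HermitianProduct.
Variables (C : numClosedFieldType) (N : nat).
Implicit Types x y z : 'cV[C]_N.

Lemma dotcE x y : dotc x y = \sum_(i < N) (x i 0)^* * y i 0.
Proof. by rewrite /dotc /adjmx !mxE; apply: eq_bigr => i _; rewrite !mxE. Qed.

Lemma dotcDr x y z : dotc x (y + z) = dotc x y + dotc x z.
Proof. by rewrite !dotcE -big_split; apply: eq_bigr => i _; rewrite mxE mulrDr. Qed.

Lemma dotcZr x y a : dotc x (a *: y) = a * dotc x y.
Proof. by rewrite !dotcE mulr_sumr; apply: eq_bigr => i _; rewrite mxE mulrCA. Qed.

Lemma dotcBr x y z : dotc x (y - z) = dotc x y - dotc x z.
Proof. by rewrite -scaleN1r dotcDr dotcZr mulN1r. Qed.

Lemma dotc0r x : dotc x 0 = 0.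
Proof. by rewrite -(scale0r 0) dotcZr mul0r. Qed.

Lemma dotcC x y : dotc y x = (dotc x y)^*.
Proof.
rewrite !dotcE rmorph_sum /=; apply: eq_bigr => i _.
by rewrite rmorphM /= conjCK mulrC.
Qed.

Lemma dotcDl x y z : dotc (x + y) z = dotc x z + dotc y z.
Proof. by rewrite dotcC dotcDr rmorphD /= -!dotcC. Qed.

Lemma dotcZl x y a : dotc (a *: x) y = a^* * dotc x y.
Proof. by rewrite dotcC dotcZr rmorphM /= -dotcC. Qed.

Lemma dotcBl x y z : dotc (x - y) z = dotc x z - dotc y z.
Proof. by rewrite -scaleN1r dotcDl dotcZl rmorphN1 mulN1r. Qed.

Lemma dotc0l x : dotc 0 x = 0.
Proof. by rewrite dotcC dotc0r rmorph0. Qed.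

Lemma dotc_sumr n (F : 'I_n -> 'cV[C]_N) y :
  dotc y (\sum_(i < n) F i) = \sum_(i < n) dotc y (F i).
Proof. by rewrite /dotc mulmx_sumr summxE. Qed.

Lemma dotc_suml n (F : 'I_n -> 'cV[C]_N) y :
  dotc (\sum_(i < n) F i) y = \sum_(i < n) dotc (F i) y.
Proof.
by rewrite dotcC dotc_sumr rmorph_sum; apply: eq_bigr => i _; rewrite [RHS]dotcC.
Qed.

Lemma dotcxx_ge0 x : 0 <= dotc x x.
Proof. by rewrite dotcE sumr_ge0 // => i _; rewrite mulrC mul_conjC_ge0. Qed.

Lemma dotcxx_eq0 x : (dotc x x == 0) = (x == 0).
Proof.
apply/idP/eqP => [|->]; last by rewrite dotc0r.
rewrite dotcE psumr_eq0 => [/allP x0|i _]; last by rewrite mulrC mul_conjC_ge0.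
apply/matrixP => i j; rewrite ord1 mxE.
by have /implyP := x0 i (mem_index_enum _); rewrite mulrC mul_conjC_eq0 => /(_ isT)/eqP.
Qed.

Lemma norm2_real x : (norm2 x)^* = norm2 x.
Proof. by apply: conj_Creal; apply: ger0_real; rewrite sqrtC_ge0 dotcxx_ge0. Qed.

Lemma norm2_sqr x : norm2 x * norm2 x = dotc x x.
Proof. by rewrite -expr2 sqrtCK. Qed.

Lemma norm2_eq0 x : (norm2 x == 0) = (x == 0).
Proof. by rewrite -dotcxx_eq0 -norm2_sqr mulf_eq0 orbb. Qed.

Lemma dotc_normalize x : x != 0 ->
  dotc ((norm2 x)^-1 *: x) ((norm2 x)^-1 *: x) = 1.
Proof.
rewrite -norm2_eq0 => nx0.
by rewrite dotcZl dotcZr fmorphV /= norm2_real -norm2_sqr; field.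
Qed.

Lemma dotc_isometry (V : 'M[C]_N) x y : adjmx V *m V = 1%:M ->
  dotc (V *m x) (V *m y) = dotc x y.
Proof.
move=> VV; rewrite /dotc /adjmx map_mxM trmx_mul -!mulmxA (mulmxA _ V).
by rewrite -/(adjmx V) VV mul1mx.
Qed.

End HermitianProduct.

Section NatIndexedEntries.
Variable C : numClosedFieldType.

Lemma mxnE m n (A : 'M[C]_(m, n)) (i : 'I_m) (j : 'I_n) : mxn A i j = A i j.
Proof. by rewrite /mxn !valK. Qed.

Lemma mxn_ord m n (A : 'M[C]_(m, n)) i j (im : (i < m)%N) (jn : (j < n)%N) :
  mxn A i j = A (Ordinal im) (Ordinal jn).
Proof. by rewrite -mxnE. Qed.

Lemma mxn_mulmx m n p (A : 'M[C]_(m, n)) (B : 'M[C]_(n, p)) i j :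
  mxn (A *m B) i j = \sum_(t < n) mxn A i t * mxn B t j.
Proof.
rewrite /mxn; case: insubP => [a _ _|_]; last by rewrite big1 // => t _; rewrite mul0r.
case: insubP => [c _ _|_]; last by rewrite big1 // => t _; case: insub => *; rewrite mulr0.
by rewrite mxE; apply: eq_bigr => t _; rewrite valK.
Qed.

Lemma mxn_lower_eq0 n (A : 'M[C]_n) i j :
  (forall a b : 'I_n, (a < b)%N -> A a b = 0) -> (i < j)%N -> mxn A i j = 0.
Proof.
rewrite /mxn => A0 ij; case: insubP => [a _ ai|_] //; case: insubP => [c _ cj|_] //.
by apply: A0; rewrite ai cj.
Qed.

Lemma mxn_upper_eq0 n (A : 'M[C]_n) i j :
  (forall a b : 'I_n, (b < a)%N -> A a b = 0) -> (j < i)%N -> mxn A i j = 0.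
Proof.
rewrite /mxn => A0 ji; case: insubP => [a _ ai|_] //; case: insubP => [c _ cj|_] //.
by apply: A0; rewrite ai cj.
Qed.

Lemma leadmx_id n (A : 'M[C]_n) : leadmx n A = A.
Proof. by apply/matrixP => i j; rewrite mxE mxnE. Qed.

Lemma leadmx_mul_lower n j (A B : 'M[C]_n) : (j <= n)%N ->
  (forall a b : 'I_n, (a < b)%N -> A a b = 0) ->
  leadmx j (A *m B) = leadmx j A *m leadmx j B.
Proof.
move=> jn A0; apply/matrixP => a c; rewrite !mxE mxn_mulmx.
rewrite (@sum_trunc _ n j (fun t => mxn A a t * mxn B t c)) //.
  by apply: eq_bigr => t _; rewrite !mxE.
by move=> s js; rewrite mxn_lower_eq0 ?mul0r // (leq_trans (ltn_ord a)).
Qed.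

Lemma leadmx_lower n j (A : 'M[C]_n) :
  (forall a b : 'I_n, (a < b)%N -> A a b = 0) ->
  forall a b : 'I_j, (a < b)%N -> leadmx j A a b = 0.
Proof. by move=> A0 a b ab; rewrite mxE mxn_lower_eq0. Qed.

Lemma leadmx_upper n j (A : 'M[C]_n) :
  (forall a b : 'I_n, (b < a)%N -> A a b = 0) ->
  forall a b : 'I_j, (b < a)%N -> leadmx j A a b = 0.
Proof. by move=> A0 a b ba; rewrite mxE mxn_upper_eq0. Qed.

Lemma ecol_tr_mulE n i (y : 'cV[C]_n) : (i < n)%N -> ((ecol n i)^T *m y) 0 0 = mxn y i 0.
Proof.
move=> ni; rewrite mxE (mxn_ord _ ni (ltn0Sn 0)).
rewrite (bigD1 (Ordinal ni)) //= !mxE eqxx mul1r big1 ?addr0 // => a.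
by rewrite -(inj_eq val_inj) !mxE => /negbTE ->; rewrite mul0r.
Qed.

Lemma unitmx_lower n (A : 'M[C]_n) :
  (forall a b : 'I_n, (a < b)%N -> A a b = 0) -> (forall a, A a a != 0) ->
  A \in unitmx.
Proof.
move=> A0 Ad; rewrite unitmxE det_trig; last exact/is_trig_mxP.
by rewrite unitfE prodf_seq_neq0; apply/allP => a _; rewrite Ad.
Qed.

Lemma unitmx_upper n (A : 'M[C]_n) :
  (forall a b : 'I_n, (b < a)%N -> A a b = 0) -> (forall a, A a a != 0) ->
  A \in unitmx.
Proof.
move=> A0 Ad; rewrite -unitmx_tr unitmx_lower // => [a b ab|a]; rewrite mxE //.
exact: A0.
Qed.

Lemma lastrow_invmx_unit_upper n (A : 'M[C]_n) :
  (forall a b : 'I_n, (b < a)%N -> A a b = 0) -> (forall a, A a a = 1) ->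
  (ecol n n.-1)^T *m invmx A = (ecol n n.-1)^T.
Proof.
move=> A0 A1; have uA : A \in unitmx by apply: unitmx_upper => // a; rewrite A1 oner_eq0.
apply: (canLR (mulmxK uA)); apply/esym/matrixP => i b; rewrite ord1 !mxE.
under eq_bigr do rewrite !mxE.
have bn := ltn_ord b; have n1 : (n.-1 < n)%N by lia.
rewrite (bigD1 (Ordinal n1)) //= eqxx mul1r big1 ?addr0.
  have [bl|bl] := eqVneq (b : nat) n.-1.
    by rewrite (_ : b = Ordinal n1) ?A1 //; exact: val_inj.
  by rewrite A0 //=; lia.
by move=> a /negbTE; rewrite -(inj_eq val_inj) /= => ->; rewrite mul0r.
Qed.

End NatIndexedEntries.

Section TridiagonalLU.
Variables (C : numClosedFieldType) (k : nat) (T Lt Ut : 'M[C]_k).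
Hypothesis T_LU : T = Lt *m Ut.
Hypothesis T_tridiag : forall i j : 'I_k, (i.+1 < j)%N || (j.+1 < i)%N -> T i j = 0.
Hypothesis Lt_lower : forall i j : 'I_k, (i < j)%N -> Lt i j = 0.
Hypothesis Lt_diag : forall i : 'I_k, Lt i i != 0.
Hypothesis Ut_upper : forall i j : 'I_k, (j < i)%N -> Ut i j = 0.
Hypothesis Ut_diag : forall i : 'I_k, Ut i i = 1.

Local Notation T_ := (mxn T).
Local Notation L_ := (mxn Lt).
Local Notation U_ := (mxn Ut).

Lemma mxn_T_LU a b : T_ a b = \sum_(t < k) L_ a t * U_ t b.
Proof. by rewrite T_LU mxn_mulmx. Qed.

Lemma mxn_T_eq0 a b : (a.+1 < b)%N || (b.+1 < a)%N -> T_ a b = 0.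
Proof.
rewrite /mxn => ab; case: insubP => [i _ ai|_] //; case: insubP => [j _ bj|_] //.
by apply: T_tridiag; rewrite ai bj.
Qed.

Lemma mxn_Ut_diag t : (t < k)%N -> U_ t t = 1.
Proof. by move=> tk; rewrite (mxn_ord _ tk tk). Qed.

Lemma mxn_Lt_diag t : (t < k)%N -> L_ t t != 0.
Proof. by move=> tk; rewrite (mxn_ord _ tk tk). Qed.

Lemma Lt_bidiag a t : (t.+1 < a)%N -> L_ a t = 0.
Proof.
elim/ltn_ind: t => t IH ta; case: (ltnP a k) => ak; last first.
  by rewrite /mxn insubF // ltnNge ak.
have tk : (t < k)%N by lia.
have := mxn_T_LU a t; rewrite mxn_T_eq0 ?ta ?orbT //.
rewrite (@sum_supp1 _ k t (fun s => L_ a s * U_ s t)) // ?mxn_Ut_diag ?mulr1 //.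
move=> s sk st; case: (ltnP s t) => h; first by rewrite IH ?mul0r //; lia.
by rewrite (mxn_upper_eq0 Ut_upper) ?mulr0 //; lia.
Qed.

Lemma Ut_bidiag t b : (t.+1 < b)%N -> U_ t b = 0.
Proof.
elim/ltn_ind: t => t IH tb; case: (ltnP b k) => bk; last first.
  by rewrite /mxn; case: insub => // ?; rewrite insubF // ltnNge bk.
have tk : (t < k)%N by lia.
have := mxn_T_LU t b; rewrite mxn_T_eq0 ?tb //.
rewrite (@sum_supp1 _ k t (fun s => L_ t s * U_ s b)) //.
  by move/esym/eqP; rewrite mulf_eq0 (negbTE (mxn_Lt_diag tk)) => /eqP.
move=> s sk st; case: (ltnP s t) => h; first by rewrite IH ?mulr0 //; lia.
by rewrite (mxn_lower_eq0 Lt_lower) ?mul0r //; lia.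
Qed.

Lemma Lt_00 : (0 < k)%N -> L_ 0 0 = T_ 0 0.
Proof.
move=> k0; rewrite mxn_T_LU (@sum_supp1 _ k 0 (fun s => L_ 0 s * U_ s 0)) //.
  by rewrite mxn_Ut_diag ?mulr1.
by move=> s _ s0; rewrite (mxn_lower_eq0 Lt_lower) ?mul0r //; lia.
Qed.

Lemma Lt_subdiag a : (a.+1 < k)%N -> L_ a.+1 a = T_ a.+1 a.
Proof.
move=> ak; rewrite mxn_T_LU (@sum_supp1 _ k a (fun s => L_ a.+1 s * U_ s a)); try lia.
  by rewrite mxn_Ut_diag ?mulr1 //; lia.
move=> s sk sa; case: (ltnP s a) => h; first by rewrite Lt_bidiag ?mul0r //; lia.
by rewrite (mxn_upper_eq0 Ut_upper) ?mulr0 //; lia.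
Qed.

Lemma Lt_Ut_superdiag a : (a.+1 < k)%N -> L_ a a * U_ a a.+1 = T_ a a.+1.
Proof.
move=> ak; rewrite mxn_T_LU (@sum_supp1 _ k a (fun s => L_ a s * U_ s a.+1)) //; try lia.
move=> s sk sa; case: (ltnP s a) => h; first by rewrite Ut_bidiag ?mulr0 //; lia.
by rewrite (mxn_lower_eq0 Lt_lower) ?mul0r //; lia.
Qed.

Lemma Lt_diagS a : (a.+1 < k)%N ->
  L_ a.+1 a.+1 = T_ a.+1 a.+1 - L_ a.+1 a * U_ a a.+1.
Proof.
move=> ak; rewrite mxn_T_LU (@sum_supp2 _ k a (fun s => L_ a.+1 s * U_ s a.+1)) //.
  by rewrite mxn_Ut_diag //; ring.
move=> s sk sa sa1; case: (ltnP s a) => h; first by rewrite Lt_bidiag ?mul0r //; lia.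
by rewrite (mxn_lower_eq0 Lt_lower) ?mul0r //; lia.
Qed.

End TridiagonalLU.

Section TridiagonalT.
Variables (C : numClosedFieldType) (c1 c2 : C) (l ls u : nat -> C).

Lemma Tmx_tridiag j (a b : 'I_j) :
  (a.+1 < b)%N || (b.+1 < a)%N -> Tmx c1 c2 l ls u j a b = 0.
Proof.
move=> ab; rewrite !mxE; do !case: eqP => /= [?|_]; rewrite ?mulr0 ?addr0 //; lia.
Qed.

Lemma mxn_Tmx_diag j a : (a < j)%N -> mxn (Tmx c1 c2 l ls u j) a a = c1 + c2 * l a.+1.
Proof. by move=> aj; rewrite (mxn_ord _ aj aj) !mxE eqxx mulr1. Qed.

Lemma mxn_Tmx_subdiag j a : (a.+1 < j)%N ->
  mxn (Tmx c1 c2 l ls u j) a.+1 a = c2 * ls a.+1.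
Proof.
move=> aj; rewrite (mxn_ord _ aj (ltnW aj)) !mxE /= eqxx !ifN_eq ?mulr0 ?add0r //; lia.
Qed.

Lemma mxn_Tmx_superdiag j a : (a.+1 < j)%N ->
  mxn (Tmx c1 c2 l ls u j) a a.+1 = c1 * u a.+2.
Proof.
move=> aj; rewrite (mxn_ord _ (ltnW aj) aj) !mxE /= eqxx !ifN_eq ?mulr0 ?addr0 //; lia.
Qed.

Lemma leadmx_Tmx j k : (j <= k)%N ->
  leadmx j (Tmx c1 c2 l ls u k) = Tmx c1 c2 l ls u j.
Proof.
move=> jk; apply/matrixP => a b.
by rewrite mxE (mxn_ord _ (leq_trans (ltn_ord a) jk) (leq_trans (ltn_ord b) jk)) !mxE.
Qed.

Lemma Umx_unit j : Umx u j \in unitmx.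
Proof.
apply: unitmx_upper => [a b ba|a]; rewrite !mxE ?eqxx ?oner_eq0 //.
by rewrite !ifN_eq //; lia.
Qed.

End TridiagonalT.

Section ColumnSpans.
Variables (C : numClosedFieldType) (N : nat).
Implicit Types (f : nat -> 'cV[C]_N) (y z : 'cV[C]_N).

Definition in_span f m y := exists c : nat -> C, y = \sum_(i < m) c i *: f i.

Lemma in_span0 f m : in_span f m 0.
Proof. by exists (fun=> 0); rewrite big1 // => i _; rewrite scale0r. Qed.

Lemma in_spanD f m y z : in_span f m y -> in_span f m z -> in_span f m (y + z).
Proof.
move=> [c ->] [d ->]; exists (fun i => c i + d i).
by rewrite -big_split; apply: eq_bigr => i _; rewrite scalerDl.
Qed.

Lemma in_spanZ f m a y : in_span f m y -> in_span f m (a *: y).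
Proof.
move=> [c ->]; exists (fun i => a * c i).
by rewrite scaler_sumr; apply: eq_bigr => i _; rewrite scalerA.
Qed.

Lemma in_spanB f m y z : in_span f m y -> in_span f m z -> in_span f m (y - z).
Proof. by move=> fy fz; rewrite -scaleN1r; apply/in_spanD/in_spanZ. Qed.

Lemma in_span_widen f m m' y : (m <= m')%N -> in_span f m y -> in_span f m' y.
Proof.
move=> mm [c ->]; exists (fun i => if (i < m)%N then c i else 0).
rewrite (big_ord_widen m' (fun i => c i *: f i) mm) [LHS]big_mkcond /=.
by apply: eq_bigr => i _; case: ifP; rewrite ?scale0r.
Qed.

Lemma in_span_gen f m i : (i < m)%N -> in_span f m (f i).
Proof.
move=> im; exists (fun j => (j == i)%:R).
rewrite (@sum_supp1 _ m i (fun j => (j == i)%:R *: f j)) ?eqxx ?scale1r //.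
by move=> s _ /negbTE ->; rewrite scale0r.
Qed.

Lemma in_span_sum f m n (F : 'I_n -> 'cV[C]_N) :
  (forall i, in_span f m (F i)) -> in_span f m (\sum_(i < n) F i).
Proof. by move=> fF; elim/big_ind: _ => //; [apply: in_span0|apply: in_spanD]. Qed.

Lemma QmxE f m (z : 'cV[C]_m) : Qmx f m *m z = \sum_(i < m) z i 0 *: f i.+1.
Proof.
apply/matrixP => r c; rewrite ord1 !mxE summxE; apply: eq_bigr => i _.
by rewrite !mxE mulrC.
Qed.

Lemma Qmx_ecol f m a : (a < m)%N -> Qmx f m *m ecol m a = f a.+1.
Proof.
move=> am; rewrite QmxE.
under eq_bigr do rewrite mxE.
rewrite (@sum_supp1 _ m a (fun i => (i == a)%:R *: f i.+1)) ?eqxx ?scale1r //.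
by move=> s _ /negbTE ->; rewrite scale0r.
Qed.

Lemma QmxUE f (u : nat -> C) m r (a : 'I_m) : f 0 = 0 ->
  (Qmx f m *m Umx u m) r a = f a.+1 r 0 + u a.+1 * f a r 0.
Proof.
move=> f0; rewrite mxE.
under eq_bigr do rewrite !mxE.
have am := ltn_ord a; case: (nat_of_ord a) am => [|a'] am.
  rewrite (@sum_supp1 _ m 0 (fun t => f t.+1 r 0 *
    (if t == 0%N then 1 else if 0%N == t.+1 then u 1 else 0))) //.
    by rewrite mulr1 f0 mxE mulr0 addr0.
  by move=> s _ /negbTE ->; rewrite mulr0.
rewrite (@sum_supp2 _ m a' (fun t => f t.+1 r 0 *
    (if t == a'.+1 then 1 else if a'.+1 == t.+1 then u a'.+2 else 0))) //.
  by rewrite eqxx ifN_eq /=; [ring | lia].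
by move=> s _ s1 s2; rewrite !ifN_eq ?mulr0 //; lia.
Qed.

Lemma adj_Qmx_mulE f m y (i : 'I_m) : (adjmx (Qmx f m) *m y) i 0 = dotc (f i.+1) y.
Proof. by rewrite dotcE !mxE; apply: eq_bigr => r _; rewrite !mxE. Qed.

Lemma in_span_Qmx f m y :
  in_span (fun i => f i.+1) m y <-> exists z : 'cV[C]_m, y = Qmx f m *m z.
Proof.
split=> [[c ->]|[z ->]].
  by exists (\col_(i < m) c i); rewrite QmxE; apply: eq_bigr => i _; rewrite mxE.
by exists (fun i => mxn z i 0); rewrite QmxE; apply: eq_bigr => i _; rewrite (mxnE z i 0).
Qed.

End ColumnSpans.

Definition orthonormal_upto (C : numClosedFieldType) (N : nat) (f : nat -> 'cV[C]_N) m :=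
  forall a c, (1 <= a <= m)%N -> (1 <= c <= m)%N -> dotc (f a) (f c) = if a == c then 1 else 0.

Lemma orthonormal_upto_le (C : numClosedFieldType) N (f : nat -> 'cV[C]_N) m m' :
  (m <= m')%N -> orthonormal_upto f m' -> orthonormal_upto f m.
Proof. by move=> mm O a c ha hc; apply: O; lia. Qed.

Lemma orthonormal_uptoS (C : numClosedFieldType) N (f : nat -> 'cV[C]_N) m :
  orthonormal_upto f m -> (forall a, (1 <= a <= m)%N -> dotc (f a) (f m.+1) = 0) ->
  dotc (f m.+1) (f m.+1) = 1 -> orthonormal_upto f m.+1.
Proof.
move=> O fm fmm a c ha hc.
have [-> | am] := eqVneq a m.+1; have [-> | cm] := eqVneq c m.+1.
- by rewrite fmm ?eqxx.
- by rewrite dotcC fm ?rmorph0 //; lia.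
- by rewrite fm ?ifN_eq //; lia.
- by apply: O; lia.
Qed.

(* On vectors x orthogonal to q_1, ..., q_(i-1), the functional q_i^* V x is the
   multiple vcoef i of q_1^* V x: pairing the Arnoldi relation with V x gives
   l_(i+1,i)^* q_(i+1)^* V x = - l_ii^* q_i^* V x. *)
Fixpoint vcoef (C : numClosedFieldType) (l ls : nat -> C) (i : nat) : C :=
  match i with
  | 0 | 1 => 1
  | i'.+1 => - (l i')^* / (ls i')^* * vcoef l ls i'
  end.

Section UnitaryArnoldi.
Variables (C : numClosedFieldType) (N : nat) (V : 'M[C]_N) (b : 'cV[C]_N) (k : nat).
Variables (q v : nat -> 'cV[C]_N) (l ls u : nat -> C).
Hypothesis V_isometry : adjmx V *m V = 1%:M.
Hypothesis arnoldi : unitary_arnoldi V b k q v l ls u.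

Lemma arnoldi_q0 : q 0 = 0. Proof. by case: (arnoldi). Qed.

Lemma arnoldi_q1 : q 1 = (norm2 b)^-1 *: b. Proof. by case: (arnoldi). Qed.

Lemma arnoldi_v j : (j <= k)%N -> v j = V *m q j.
Proof.
case: (arnoldi) => q0 v0 _ _ step; case: j => [|j] jk; first by rewrite v0 q0 mulmx0.
by case: (step j.+1); rewrite ?jk.
Qed.

Lemma arnoldi_ls_neq0 j : (1 <= j <= k)%N -> ls j != 0.
Proof. by move=> jk; case: (arnoldi) => _ _ _ _ /(_ j jk) [_ _ _ _ []]. Qed.

Lemma arnoldi_rel j : (1 <= j <= k)%N ->
  ls j *: q j.+1 = V *m q j - l j *: q j + u j *: (V *m q j.-1).
Proof.
move=> jk; case: (arnoldi) => _ _ _ _ /(_ j jk) [_ _ _ _ [ls_neq0 ->]].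
by rewrite scalerA divff // scale1r !arnoldi_v //; lia.
Qed.

Lemma arnoldi_qnorm j : (1 <= j <= k)%N -> dotc (q j.+1) (q j.+1) = 1.
Proof.
move=> jk; case: (arnoldi) => _ _ _ _ /(_ j jk) [_ _ _ ls_def [ls_neq0 ->]].
by rewrite ls_def dotc_normalize // -norm2_eq0 -ls_def.
Qed.

Lemma dotc_qV_vcoef i x : (1 <= i <= k.+1)%N ->
  (forall t, (1 <= t < i)%N -> dotc (q t) x = 0) ->
  dotc (q i) (V *m x) = vcoef l ls i * dotc (q 1) (V *m x).
Proof.
elim: i => [//|[|i] IH] ik xO; first by rewrite mul1r.
have qix : dotc (q i) x = 0.
  by case: i {IH ik} xO => [|i] xO; [rewrite arnoldi_q0 dotc0l | apply: xO; lia].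
have lsc_neq0 : (ls i.+1)^* != 0 by rewrite conjC_eq0 arnoldi_ls_neq0 //; lia.
have rel : (ls i.+1)^* * dotc (q i.+2) (V *m x) = - (l i.+1)^* * dotc (q i.+1) (V *m x).
  rewrite -dotcZl arnoldi_rel; last by lia.
  rewrite dotcDl dotcBl !dotcZl !dotc_isometry // xO ?qix; last by lia.
  by rewrite mulr0 addr0 sub0r mulNr.
rewrite -[LHS](mulKf lsc_neq0) rel IH /=; first by field.
- by lia.
- by move=> t ht; apply: xO; lia.
Qed.

Lemma vcoef_neq0 i : (1 <= i)%N -> (i < k)%N -> orthonormal_upto q i ->
  vcoef l ls i != 0.
Proof.
move=> i1 ik O; case: (arnoldi) => _ _ _ _ /(_ i.+1) [|_ /(_ i1) [qv_neq0 _] _ _ _].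
  by lia.
move: qv_neq0; rewrite /= arnoldi_v ?(ltnW ik) // dotc_qV_vcoef.
- by apply: contraNneq => ->; rewrite mul0r.
- by lia.
- by move=> t ht; rewrite O ?ifN_eq //; lia.
Qed.

Lemma dotc_qV_eq0 m x a : (1 <= a <= m)%N -> (m < k)%N -> orthonormal_upto q m ->
  (forall t, (1 <= t < m)%N -> dotc (q t) x = 0) -> dotc (q m) (V *m x) = 0 ->
  dotc (q a) (V *m x) = 0.
Proof.
move=> am mk O xO qmVx; have m1 : (0 < m)%N by lia.
have q1Vx : dotc (q 1) (V *m x) = 0.
  move: qmVx; rewrite dotc_qV_vcoef //; last by lia.
  by move/eqP; rewrite mulf_eq0 (negbTE (vcoef_neq0 m1 mk O)) => /eqP.
by rewrite dotc_qV_vcoef ?q1Vx ?mulr0 //; [lia | move=> t ht; apply: xO; lia].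
Qed.

Lemma arnoldi_orth_next j : (1 <= j <= k)%N -> orthonormal_upto q j ->
  forall a, (1 <= a <= j)%N -> dotc (q a) (q j.+1) = 0.
Proof.
move=> jk O a aj.
case: (arnoldi) => _ _ _ _ /(_ j jk) [vj u_def l_def _ _].
set p := q j + u j *: q j.-1.
have Vp : V *m p = v j + u j *: v j.-1.
  by rewrite /p mulmxDr -scalemxAr vj arnoldi_v //; lia.
have rel : ls j *: q j.+1 = V *m p - l j *: q j.
  by rewrite arnoldi_rel // mulmxDr -scalemxAr addrAC.
apply/eqP; rewrite -(mulIr_eq0 _ (mulIf (arnoldi_ls_neq0 jk))) mulrC -dotcZr rel.
rewrite dotcBr dotcZr; have [-> | aj'] := eqVneq a j.
  by rewrite O ?eqxx ?mulr1 ?Vp ?dotcDr ?dotcZr -?l_def ?subrr //; lia.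
rewrite O ?ifN_eq ?mulr0 ?subr0; try lia; apply/eqP.
have j1 : (1 < j)%N by lia.
apply: (dotc_qV_eq0 (m := j.-1)); try lia.
- exact: orthonormal_upto_le (leq_pred j) O.
- by move=> t ht; rewrite /p dotcDr dotcZr !O ?ifN_eq ?mulr0 ?addr0 //; lia.
- rewrite Vp; case: (u_def j1) => qv_neq0 ->.
  by rewrite dotcDr dotcZr mulfVK // subrr.
Qed.

Lemma arnoldi_orthonormal m : b != 0 -> (m <= k.+1)%N -> orthonormal_upto q m.
Proof.
move=> b_neq0; elim: m => [|[|m] IH] mk a c ha hc; first by lia.
  have -> : a = 1%N by lia.
  have -> : c = 1%N by lia.
  by rewrite arnoldi_q1 dotc_normalize.
move: a c ha hc; apply: orthonormal_uptoS; first by apply: IH; lia.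
  by apply: arnoldi_orth_next; [lia | apply: IH; lia].
by apply: arnoldi_qnorm; lia.
Qed.

Lemma dotc_qq i a : b != 0 -> (1 <= i <= k.+1)%N -> (a <= k.+1)%N ->
  dotc (q i) (q a) = if i == a then 1 else 0.
Proof.
move=> b_neq0; case: a => [|a] ia ak; first by rewrite arnoldi_q0 dotc0r ifN_eq //; lia.
by apply: (arnoldi_orthonormal b_neq0 (leqnn _)); lia.
Qed.

End UnitaryArnoldi.

Section ArnoldiGalerkin.
Variables (C : numClosedFieldType) (N : nat) (V : 'M[C]_N) (c1 c2 : C).
Variables (b : 'cV[C]_N) (k : nat) (q v : nat -> 'cV[C]_N) (l ls u : nat -> C).
Hypothesis V_isometry : adjmx V *m V = 1%:M.
Hypothesis arnoldi : unitary_arnoldi V b k q v l ls u.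
Hypothesis b_neq0 : b != 0.

Local Notation D := (c1%:M + c2 *: V).
Local Notation T := (Tmx c1 c2 l ls u k).
Local Notation QU := (Qmx q k *m Umx u k).

Lemma norm2_b_neq0 : norm2 b != 0.
Proof. by rewrite norm2_eq0. Qed.

Lemma b_norm2_q1 : b = norm2 b *: q 1.
Proof. by rewrite (arnoldi_q1 arnoldi) scalerA divff ?scale1r ?norm2_b_neq0. Qed.

Lemma mulQmxU (z : 'cV[C]_k) : QU *m z = \sum_(a < k) z a 0 *: (q a.+1 + u a.+1 *: q a).
Proof.
apply/matrixP => r c; rewrite ord1 !mxE summxE; apply: eq_bigr => a _.
by rewrite (QmxUE _ _ _ (arnoldi_q0 arnoldi)) !mxE mulrC.
Qed.

Lemma D_qUq a : (a < k)%N ->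
  D *m (q a.+1 + u a.+1 *: q a) =
  c1 *: (q a.+1 + u a.+1 *: q a) + c2 *: (l a.+1 *: q a.+1 + ls a.+1 *: q a.+2).
Proof.
move=> ak; rewrite mulmxDl mul_scalar_mx -scalemxAl; congr (_ + c2 *: _).
by rewrite (arnoldi_rel (j := a.+1) arnoldi ak) mulmxDr -scalemxAr [RHS]addrC addrAC subrK.
Qed.

Lemma dotc_q_DqUq (i a : 'I_k) :
  dotc (q i.+1) (D *m (q a.+1 + u a.+1 *: q a)) = T i a.
Proof.
have ik := ltn_ord i; have ak := ltn_ord a.
rewrite D_qUq // !dotcDr !dotcZr !dotcDr !dotcZr !(dotc_qq V_isometry arnoldi b_neq0);
  try lia.
rewrite !mxE !eqSS; have [->|ia] := eqVneq (i : nat) a.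
  by rewrite ?eqxx !ifN_eq; [ring|lia..].
rewrite [(i.+1 == a)]eq_sym; case: eqP => [ai|_]; case: eqP => [iai|_] /=; try lia; ring.
Qed.

Lemma adj_Qmx_DQU (z : 'cV[C]_k) : adjmx (Qmx q k) *m (D *m (QU *m z)) = T *m z.
Proof.
apply/matrixP => i c; rewrite ord1 adj_Qmx_mulE mulQmxU mulmx_sumr dotc_sumr mxE.
by apply: eq_bigr => a _; rewrite -scalemxAr dotcZr dotc_q_DqUq mulrC.
Qed.

Lemma adj_Qmx_b : adjmx (Qmx q k) *m b = norm2 b *: ecol k 0.
Proof.
apply/matrixP => i c; rewrite ord1 adj_Qmx_mulE !mxE {1}b_norm2_q1 dotcZr.
have ik := ltn_ord i.
by rewrite (dotc_qq V_isometry arnoldi b_neq0) ?eqSS; [case: (_ == _) | lia..].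
Qed.

Lemma galerkinP (z : 'cV[C]_k) :
  (forall i : 'I_k, dotc (q i.+1) (b - D *m (QU *m z)) = 0) <->
  T *m z = norm2 b *: ecol k 0.
Proof.
have resE : adjmx (Qmx q k) *m (b - D *m (QU *m z)) = norm2 b *: ecol k 0 - T *m z.
  by rewrite mulmxBr adj_Qmx_b adj_Qmx_DQU.
split=> [orth | Tz i].
  apply/eqP; rewrite eq_sym -subr_eq0 -resE; apply/eqP/matrixP => i c.
  by rewrite ord1 adj_Qmx_mulE orth mxE.
by rewrite -adj_Qmx_mulE resE Tz subrr mxE.
Qed.

End ArnoldiGalerkin.

Lemma in_span_krylov (C : numClosedFieldType) N (D : 'M[C]_N) b k y :
  in_span (fun i => D ^+ i *m b) k y -> in_krylov D b k y.
Proof. by move=> [d ->]; exists (fun i => d i). Qed.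

Lemma b_krylov (C : numClosedFieldType) N (D : 'M[C]_N) b k : (0 < k)%N -> in_krylov D b k b.
Proof.
move=> k0; apply: in_span_krylov.
by have := in_span_gen (fun i => D ^+ i *m b) k0; rewrite expr0 mul1mx.
Qed.

Lemma krylov_scalar (C : numClosedFieldType) N (c : C) (b y : 'cV[C]_N) k :
  in_krylov c%:M b k y -> exists s, y = s *: b.
Proof.
move=> [cs ->]; exists (\sum_(i < k) cs i * c ^+ i); rewrite scaler_suml.
apply: eq_bigr => i _; rewrite -scalerA; congr (_ *: _).
elim: (nat_of_ord i) => [|n IH]; first by rewrite expr0 mul1mx scale1r.
by rewrite exprS -[_ * _]/(_ *m _) -mulmxA IH mul_scalar_mx scalerA -exprS.
Qed.

Section KrylovSpace.
Variables (C : numClosedFieldType) (N : nat) (V : 'M[C]_N) (c1 c2 : C).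
Variables (b : 'cV[C]_N) (k : nat) (q v : nat -> 'cV[C]_N) (l ls u : nat -> C).
Hypothesis arnoldi : unitary_arnoldi V b k q v l ls u.

Local Notation D := (c1%:M + c2 *: V).
Local Notation qs := (fun i => q i.+1).
Local Notation Kb := (fun i => D ^+ i *m b).

Lemma Vq_span j : (j <= k)%N -> in_span qs j.+1 (V *m q j).
Proof.
elim: j => [_|j IH jk]; first by rewrite (arnoldi_q0 arnoldi) mulmx0; apply: in_span0.
have Vq : V *m q j.+1 = ls j.+1 *: q j.+2 + l j.+1 *: q j.+1 - u j.+1 *: (V *m q j).
  by rewrite (arnoldi_rel (j := j.+1) arnoldi jk) addrAC addrK subrK.
rewrite Vq; apply: in_spanB; [apply: in_spanD|]; apply: in_spanZ.
- exact: in_span_gen.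
- exact: in_span_gen.
- exact: in_span_widen (leqnSn _) (IH (ltnW jk)).
Qed.

Lemma V_span m y : (m <= k)%N -> in_span qs m y -> in_span qs m.+1 (V *m y).
Proof.
move=> mk [c ->]; rewrite mulmx_sumr; apply: in_span_sum => i.
rewrite -scalemxAr; apply: in_spanZ; apply: (@in_span_widen _ _ _ i.+2).
  exact: ltn_ord.
exact: Vq_span (leq_trans (ltn_ord i) mk).
Qed.

Lemma D_span m y : (m <= k)%N -> in_span qs m y -> in_span qs m.+1 (D *m y).
Proof.
move=> mk qy; rewrite mulmxDl mul_scalar_mx -scalemxAl.
by apply: in_spanD; apply: in_spanZ; [apply: in_span_widen (leqnSn m) qy | apply: V_span].
Qed.

Lemma krylov_span y : b != 0 -> in_krylov D b k y -> in_span qs k y.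
Proof.
move=> b_neq0 [cs ->]; apply: in_span_sum => i; apply: in_spanZ.
apply: (@in_span_widen _ _ _ i.+1); first exact: ltn_ord.
elim: (nat_of_ord i) (ltn_ord i) => [_|n IH nk].
  by rewrite expr0 mul1mx (b_norm2_q1 arnoldi b_neq0); apply/in_spanZ/in_span_gen.
by rewrite exprS -[_ * _]/(_ *m _) -mulmxA; apply: D_span (ltnW nk) (IH (ltnW nk)).
Qed.

Lemma D_krylov m y : in_span Kb m y -> in_span Kb m.+1 (D *m y).
Proof.
move=> [c ->]; exists (fun i => if i is i'.+1 then c i' else 0).
rewrite big_ord_recl /= scale0r add0r mulmx_sumr; apply: eq_bigr => i _.
by rewrite -scalemxAr mulmxA exprS.
Qed.

Section NonScalarShift.
Hypothesis c2_neq0 : c2 != 0.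

Lemma V_krylov m y : in_span Kb m y -> in_span Kb m.+1 (V *m y).
Proof.
move=> Ky; have -> : V *m y = c2^-1 *: (D *m y - c1 *: y).
  by rewrite mulmxDl mul_scalar_mx addrC addKr -scalemxAl scalerA mulVf ?scale1r.
by apply/in_spanZ/in_spanB; [apply: D_krylov | apply/in_spanZ/(in_span_widen (leqnSn m))].
Qed.

Lemma q_krylov j : (1 <= j <= k)%N -> in_span Kb j (q j).
Proof.
elim/ltn_ind: j => -[|[|j]] IH jk //.
  rewrite (arnoldi_q1 arnoldi); apply: in_spanZ.
  by have := @in_span_gen _ _ Kb 1 0 isT; rewrite expr0 mul1mx.
have jk' : (1 <= j.+1 <= k)%N by lia.
rewrite -[q j.+2](scalerK (arnoldi_ls_neq0 arnoldi jk')) (arnoldi_rel arnoldi jk').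
apply/in_spanZ/in_spanD; [apply: in_spanB|].
- by apply/V_krylov/IH.
- by apply/in_spanZ/(in_span_widen (leqnSn _))/IH.
- apply/in_spanZ/V_krylov; case: j {jk'} IH jk => [|j] IH jk.
    by rewrite (arnoldi_q0 arnoldi); apply: in_span0.
  by apply/(in_span_widen (leqnSn _))/IH; lia.
Qed.

Lemma span_krylov y : in_span qs k y -> in_krylov D b k y.
Proof.
move=> [c ->]; apply: in_span_krylov; apply: in_span_sum => i.
by apply/in_spanZ/(in_span_widen (ltn_ord i))/q_krylov; rewrite /= ltn_ord.
Qed.

End NonScalarShift.
End KrylovSpace.

Section ShiftedUnitaryGalerkin.
Variables (C : numClosedFieldType) (N : nat) (V : 'M[C]_N) (c1 c2 : C).
Variables (b : 'cV[C]_N) (k : nat) (q v : nat -> 'cV[C]_N) (l ls u : nat -> C).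
Variables (Lt Ut : 'M[C]_k) (alpha : nat -> C) (w x : nat -> 'cV[C]_N).
Hypothesis V_isometry : adjmx V *m V = 1%:M.
Hypothesis arnoldi : unitary_arnoldi V b k q v l ls u.
Hypothesis T_LU : Tmx c1 c2 l ls u k = Lt *m Ut.
Hypothesis Lt_lower : forall i j : 'I_k, (i < j)%N -> Lt i j = 0.
Hypothesis Lt_diag : forall i : 'I_k, Lt i i != 0.
Hypothesis Ut_upper : forall i j : 'I_k, (j < i)%N -> Ut i j = 0.
Hypothesis Ut_diag : forall i : 'I_k, Ut i i = 1.

Local Notation D := (c1%:M + c2 *: V).
Local Notation T := (Tmx c1 c2 l ls u k).
Local Notation QU := (Qmx q k *m Umx u k).
Local Notation L_ := (mxn Lt).
Local Notation U_ := (mxn Ut).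
Local Notation alphas j := (\col_(a < j) alpha a.+1).

Let T_tridiag := @Tmx_tridiag C c1 c2 l ls u k.

Lemma pivot_first : (0 < k)%N -> L_ 0 0 = c1 + c2 * l 1.
Proof. by move=> k0; rewrite (Lt_00 T_LU Lt_lower Ut_diag k0) mxn_Tmx_diag. Qed.

Lemma Lt_subdiagE a : (a.+1 < k)%N -> L_ a.+1 a = c2 * ls a.+1.
Proof.
by move=> ak; rewrite (Lt_subdiag T_LU T_tridiag Ut_upper Ut_diag ak) mxn_Tmx_subdiag.
Qed.

Lemma Ut_superdiagE a : (a.+1 < k)%N -> U_ a a.+1 = c1 * u a.+2 / L_ a a.
Proof.
move=> ak; rewrite -(mxn_Tmx_superdiag c1 c2 l ls u ak).
rewrite -(Lt_Ut_superdiag T_LU T_tridiag Lt_lower Lt_diag ak) [L_ a a * _]mulrC mulfK //.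
by rewrite (mxn_Lt_diag Lt_diag) // ltnW.
Qed.

Lemma pivot_next a : (a.+1 < k)%N ->
  L_ a.+1 a.+1 = c1 + c2 * l a.+2 - (c2 * ls a.+1) * (c1 * u a.+2) / L_ a a.
Proof.
move=> ak; rewrite (Lt_diagS T_LU T_tridiag Lt_lower Ut_upper Ut_diag ak).
by rewrite mxn_Tmx_diag // Lt_subdiagE // Ut_superdiagE // mulrA.
Qed.

Lemma leadmx_Lt_unit j : (j <= k)%N -> leadmx j Lt \in unitmx.
Proof.
move=> jk; apply: unitmx_lower (leadmx_lower Lt_lower) _ => a.
by rewrite mxE (mxn_Lt_diag Lt_diag) // (leq_trans (ltn_ord a)).
Qed.

Lemma leadmx_Ut_diag j (a : 'I_j) : (j <= k)%N -> leadmx j Ut a a = 1.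
Proof. by move=> jk; rewrite mxE (mxn_Ut_diag Ut_diag) // (leq_trans (ltn_ord a)). Qed.

Lemma leadmx_Ut_unit j : (j <= k)%N -> leadmx j Ut \in unitmx.
Proof.
move=> jk; apply: unitmx_upper (leadmx_upper Ut_upper) _ => a.
by rewrite leadmx_Ut_diag ?oner_eq0.
Qed.

Lemma leadmx_Tmx_LU j : (j <= k)%N ->
  Tmx c1 c2 l ls u j = leadmx j Lt *m leadmx j Ut.
Proof. by move=> jk; rewrite -(leadmx_Tmx _ _ _ _ _ jk) T_LU leadmx_mul_lower. Qed.

Lemma Tmx_unit : T \in unitmx.
Proof.
by rewrite -(leadmx_id T) leadmx_Tmx // leadmx_Tmx_LU // unitmx_mul
  leadmx_Lt_unit ?leadmx_Ut_unit.
Qed.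

Lemma Tmx_solvable : exists z, T *m z = norm2 b *: ecol k 0.
Proof. by exists (invmx T *m (norm2 b *: ecol k 0)); rewrite mulKVmx ?Tmx_unit. Qed.

Lemma c1_neq0_of_c2_eq0 : (0 < k)%N -> c2 = 0 -> c1 != 0.
Proof.
by move=> k0 c20; have := mxn_Lt_diag Lt_diag k0; rewrite pivot_first // c20 mul0r addr0.
Qed.

Section Recurrences.
Hypothesis alpha_1 : alpha 1 = norm2 b / L_ 0 0.
Hypothesis alpha_S : forall j, (2 <= j <= k)%N ->
  alpha j = (- c2 * ls j.-1) * alpha j.-1 / L_ j.-1 j.-1.
Hypothesis w_1 : w 1 = q 1.
Hypothesis w_S : forall j, (2 <= j <= k)%N ->
  w j = q j + u j *: q j.-1 + ((- c1 * u j.-1.+1) / L_ j.-1.-1 j.-1.-1) *: w j.-1.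
Hypothesis x_0 : x 0 = 0.
Hypothesis x_S : forall j, (1 <= j <= k)%N -> x j = x j.-1 + alpha j *: w j.

Lemma Qmx_w_Ut j : (j <= k)%N -> Qmx w j *m leadmx j Ut = Qmx q j *m Umx u j.
Proof.
move=> jk; apply/matrixP => r a; rewrite (QmxUE _ _ _ (arnoldi_q0 arnoldi)) mxE.
under eq_bigr do rewrite !mxE.
have aj := ltn_ord a; case: (nat_of_ord a) aj => [|a'] aj.
  rewrite (@sum_supp1 _ j 0 (fun s => w s.+1 r 0 * U_ s 0)) //.
    rewrite (mxn_Ut_diag Ut_diag) ?w_1 ?(arnoldi_q0 arnoldi) ?mxE; last by lia.
    by rewrite mulr1 mulr0 addr0.
  by move=> s _ s0; rewrite (mxn_upper_eq0 Ut_upper) ?mulr0 //; lia.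
rewrite (@sum_supp2 _ j a' (fun s => w s.+1 r 0 * U_ s a'.+1)) //.
  rewrite (mxn_Ut_diag Ut_diag) ?(w_S (j := a'.+2)) ?Ut_superdiagE /= ?mxE; [ring|lia..].
move=> s _ s1 s2; case: (ltnP s a') => sa.
  by rewrite (Ut_bidiag T_LU T_tridiag Lt_lower Lt_diag) ?mulr0 //; lia.
by rewrite (mxn_upper_eq0 Ut_upper) ?mulr0 //; lia.
Qed.

Lemma w_QU j : (1 <= j <= k)%N ->
  w j = Qmx q j *m Umx u j *m invmx (leadmx j Ut) *m ecol j j.-1.
Proof.
move=> jk; rewrite -Qmx_w_Ut ?mulmxK ?leadmx_Ut_unit ?Qmx_ecol ?prednK //; lia.
Qed.

Lemma leadmx_Lt_alphas j : (j <= k)%N -> leadmx j Lt *m alphas j = norm2 b *: ecol j 0.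
Proof.
move=> jk; apply/matrixP => a c; rewrite ord1 !mxE.
under eq_bigr do rewrite !mxE.
have aj := ltn_ord a; case: (nat_of_ord a) aj => [|a'] aj.
  rewrite (@sum_supp1 _ j 0 (fun s => L_ 0 s * alpha s.+1)) //.
    by rewrite alpha_1 mulrC mulfVK ?mulr1 // (mxn_Lt_diag Lt_diag) // (leq_trans aj jk).
  by move=> s _ s0; rewrite (mxn_lower_eq0 Lt_lower) ?mul0r //; lia.
rewrite (@sum_supp2 _ j a' (fun s => L_ a'.+1 s * alpha s.+1)) //.
  have ak : (a'.+1 < k)%N by lia.
  rewrite Lt_subdiagE // (alpha_S (j := a'.+2)) // [L_ _ _ * _]mulrC divfK ?mulr0; first ring.
  exact: (mxn_Lt_diag Lt_diag).
move=> s _ s1 s2; case: (ltnP s a') => sa.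
  by rewrite (Lt_bidiag T_LU T_tridiag Ut_upper Ut_diag) ?mul0r //; lia.
by rewrite (mxn_lower_eq0 Lt_lower) ?mul0r //; lia.
Qed.

Lemma x_W_alphas j : (j <= k)%N -> x j = Qmx w j *m alphas j.
Proof.
elim: j => [_|j IH jk]; first by rewrite x_0 QmxE big_ord0.
rewrite x_S // (IH (ltnW jk)) !QmxE big_ord_recr /= !mxE.
by congr (_ + _); apply: eq_bigr => i _; rewrite !mxE.
Qed.

Lemma x_QU z : T *m z = norm2 b *: ecol k 0 -> x k = QU *m z.
Proof.
move=> Tz; have uL := leadmx_Lt_unit (leqnn k); rewrite leadmx_id in uL.
have Uz : Ut *m z = alphas k.
  apply: (can_inj (mulKmx uL)); rewrite mulmxA -T_LU Tz.
  by rewrite -(leadmx_Lt_alphas (leqnn k)) leadmx_id.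
by rewrite x_W_alphas // -Uz mulmxA -(leadmx_id Ut) Qmx_w_Ut.
Qed.

Section NonzeroRightHandSide.
Hypothesis b_neq0 : b != 0.

Lemma alpha_Tinv j : (1 <= j <= k)%N ->
  alpha j = norm2 b * ((ecol j j.-1)^T *m invmx (Tmx c1 c2 l ls u j) *m ecol j 0) 0 0.
Proof.
move=> /andP[j1 jk].
have uL := leadmx_Lt_unit jk; have uU := leadmx_Ut_unit jk.
set g := invmx (Tmx c1 c2 l ls u j) *m ecol j 0.
have Ug : leadmx j Ut *m g = (norm2 b)^-1 *: alphas j.
  apply: (can_inj (mulKmx uL)); rewrite mulmxA -leadmx_Tmx_LU // mulKVmx; last first.
    by rewrite leadmx_Tmx_LU // unitmx_mul uL.
  by rewrite -scalemxAr leadmx_Lt_alphas // scalerA mulVf ?scale1r ?norm2_b_neq0.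
have lastU := lastrow_invmx_unit_upper (leadmx_upper Ut_upper) (fun a => leadmx_Ut_diag a jk).
rewrite -mulmxA -/g -(mulKmx uU g) Ug mulmxA lastU -scalemxAr mxE ecol_tr_mulE; last by lia.
have jj : (j.-1 < j)%N by lia.
by rewrite (mxn_ord _ jj (ltn0Sn 0)) mxE prednK // mulVKf ?norm2_b_neq0.
Qed.

Lemma x_residual_orth y : in_krylov D b k y -> dotc y (b - D *m x k) = 0.
Proof.
have [z Tz] := Tmx_solvable.
move=> /(krylov_span arnoldi b_neq0)/in_span_Qmx [y' ->].
rewrite (x_QU Tz) QmxE dotc_suml big1 // => i _.
by rewrite dotcZl ((galerkinP c1 c2 V_isometry arnoldi b_neq0 z).2 Tz) mulr0.
Qed.

Lemma x_scalar_shift : (0 < k)%N -> c2 = 0 -> x k = c1^-1 *: b.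
Proof.
move=> k0 c20; have [z Tz] := Tmx_solvable.
have c1_neq0 := c1_neq0_of_c2_eq0 k0 c20.
have Uz : Umx u k *m z = (c1^-1 * norm2 b) *: ecol k 0.
  by rewrite -scalerA -Tz /Tmx c20 scale0r addr0 -scalemxAl scalerA mulVf ?scale1r.
by rewrite (x_QU Tz) -mulmxA Uz -scalemxAr Qmx_ecol // -scalerA -(b_norm2_q1 arnoldi b_neq0).
Qed.

Lemma x_in_krylov : (0 < k)%N -> in_krylov D b k (x k).
Proof.
move=> k0; have [c20|c2_neq0] := eqVneq c2 0.
  rewrite x_scalar_shift //; apply/in_span_krylov/in_spanZ.
  by have := in_span_gen (fun i => D ^+ i *m b) k0; rewrite expr0 mul1mx.
have [z Tz] := Tmx_solvable; rewrite (x_QU Tz) -mulmxA.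
by apply/(span_krylov c1 arnoldi c2_neq0)/in_span_Qmx; eexists.
Qed.

Lemma x_unique x' : (0 < k)%N -> in_krylov D b k x' ->
  (forall y, in_krylov D b k y -> dotc y (b - D *m x') = 0) -> x' = x k.
Proof.
move=> k0 Kx' orth; have [c20|c2_neq0] := eqVneq c2 0.
  have c1_neq0 := c1_neq0_of_c2_eq0 k0 c20.
  have DE : D = c1%:M by rewrite c20 scale0r addr0.
  move: Kx' orth; rewrite DE => /krylov_scalar [s ->] /(_ b (b_krylov _ _ k0)).
  rewrite mul_scalar_mx scalerA -[X in X - _]scale1r -scalerBl dotcZr => /eqP.
  rewrite mulf_eq0 dotcxx_eq0 (negbTE b_neq0) orbF subr_eq0 => /eqP c1s.
  by rewrite x_scalar_shift // -[c1^-1]mulr1 c1s mulKf.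
have [z' x'E] : exists z', x' = QU *m z'.
  move/(krylov_span arnoldi b_neq0)/in_span_Qmx: Kx' => [y ->].
  by exists (invmx (Umx u k) *m y); rewrite -mulmxA mulKVmx ?Umx_unit.
rewrite x'E in orth *; apply/esym/x_QU/(galerkinP c1 c2 V_isometry arnoldi b_neq0) => i.
by apply: orth; apply: (span_krylov c1 arnoldi c2_neq0); apply: in_span_gen.
Qed.

End NonzeroRightHandSide.
End Recurrences.
End ShiftedUnitaryGalerkin.

Theorem mainTheorem5 (C : numClosedFieldType) (N : nat) (V : 'M[C]_N) (c1 c2 : C)
  (b : 'cV[C]_N) (k : nat)
  (q v : nat -> 'cV[C]_N) (l ls u : nat -> C)
  (Lt Ut : 'M[C]_k)
  (alpha : nat -> C) (w x : nat -> 'cV[C]_N) :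
  unitary_matrix V ->
  c1 \is Num.real -> c2 \is Num.real ->
  b != 0 ->
  (0 < k)%N ->
  unitary_arnoldi V b k q v l ls u ->
  Tmx c1 c2 l ls u k = Lt *m Ut ->
  (forall i j : 'I_k, (i < j)%N -> Lt i j = 0) ->
  (forall i : 'I_k, Lt i i != 0) ->
  (forall i j : 'I_k, (j < i)%N -> Ut i j = 0) ->
  (forall i : 'I_k, Ut i i = 1) ->
  let D := c1%:M + c2 *: V in
  let beta := fun j : nat => - c2 * ls j in
  let gamma := fun j : nat => - c1 * u j.+1 in
  let lt := fun j : nat => mxn Lt j.-1 j.-1 in
  alpha 1%N = norm2 b / lt 1%N ->
  (forall j, (2 <= j <= k)%N -> alpha j = beta j.-1 * alpha j.-1 / lt j) ->
  w 1%N = q 1%N ->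
  (forall j, (2 <= j <= k)%N ->
     w j = q j + u j *: q j.-1 + (gamma j.-1 / lt j.-1) *: w j.-1) ->
  x 0%N = 0 ->
  (forall j, (1 <= j <= k)%N -> x j = x j.-1 + alpha j *: w j) ->
  [/\ lt 1%N = c1 + c2 * l 1%N /\
      (forall j, (2 <= j <= k)%N ->
         lt j = c1 + c2 * l j - beta j.-1 * gamma j.-1 / lt j.-1),
      (forall j, (1 <= j <= k)%N ->
         w j = Qmx q j *m Umx u j *m invmx (leadmx j Ut) *m ecol j j.-1),
      (forall j, (1 <= j <= k)%N ->
         alpha j = norm2 b * ((ecol j j.-1)^T *m invmx (Tmx c1 c2 l ls u j)
                              *m ecol j 0) 0 0),
      [/\ in_krylov D b k (x k),
          (forall y, in_krylov D b k y -> dotc y (b - D *m x k) = 0) &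
          (forall x', in_krylov D b k x' ->
             (forall y, in_krylov D b k y -> dotc y (b - D *m x') = 0) ->
             x' = x k)] /\
      ((exists z : 'cV[C]_k, Tmx c1 c2 l ls u k *m z = norm2 b *: ecol k 0) /\
       (forall z : 'cV[C]_k, Tmx c1 c2 l ls u k *m z = norm2 b *: ecol k 0 ->
          x k = Qmx q k *m Umx u k *m z)) &
      (forall j, (1 <= j <= k)%N ->
         b - D *m x j = (b - D *m x j.-1) - alpha j *: (D *m w j))].
Proof.
move=> [V_isometry _] _ _ b_neq0 k_gt0 arnoldi T_LU Lt_lower Lt_diag Ut_upper Ut_diag
  D beta gamma lt alpha_1 alpha_S w_1 w_S x_0 x_S.
split.
- split=> [|[|[|a]] // /andP[_ ak]]; first exact: (pivot_first T_LU).
  rewrite /lt /beta /gamma /= (pivot_next T_LU Lt_lower Lt_diag Ut_upper Ut_diag ak).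
  ring.
- by move=> j; apply: (w_QU arnoldi T_LU Lt_lower Lt_diag Ut_upper Ut_diag w_1 w_S).
- by move=> j; apply: (alpha_Tinv T_LU Lt_lower Lt_diag Ut_upper Ut_diag alpha_1 alpha_S).
- split; split.
  + exact: (x_in_krylov arnoldi T_LU Lt_lower Lt_diag Ut_upper Ut_diag
      alpha_1 alpha_S w_1 w_S x_0 x_S b_neq0 k_gt0).
  + exact: (x_residual_orth V_isometry arnoldi T_LU Lt_lower Lt_diag Ut_upper Ut_diag
      alpha_1 alpha_S w_1 w_S x_0 x_S b_neq0).
  + move=> x'; exact: (x_unique V_isometry arnoldi T_LU Lt_lower Lt_diag Ut_upper Ut_diag
      alpha_1 alpha_S w_1 w_S x_0 x_S b_neq0 k_gt0).
  + exact: (Tmx_solvable b T_LU Lt_lower Lt_diag Ut_upper Ut_diag).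
  + exact: (x_QU arnoldi T_LU Lt_lower Lt_diag Ut_upper Ut_diag
      alpha_1 alpha_S w_1 w_S x_0 x_S).
- by move=> j jk; rewrite x_S // mulmxDr -scalemxAr opprD addrA.
Qed.
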